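(* Let $\omega\in\mathbb{C}^*$ and let $G$ be the map described in the context. For a stated boundary-ordered oriented tangle diagram $(D,s)$ in $\mathbb{B}$ define $\mathrm{TrHol}^\omega_{\vec B}([D,s]):=\langle \xi^s_{\rm out},\,G([D])\,\xi^s_{\rm in}\rangle\in\mathbb{C}$. Then: (1) (direction independence) Let $R:\mathbb{B}\to\mathbb{B}$, $R(u,t)=(1-u,-t)$ (an orientation-preserving diffeomorphism exchanging $b_{\rm in}$ and $b_{\rm out}$), and let $(D',s')$ be the image of $(D,s)$ under $R$, with orientation, crossing information, vertical orderings and states transported by $R$. Then $\mathrm{TrHol}^\omega_{\vec B}([D,s])=\mathrm{TrHol}^\omega_{\vec B}([D',s'])$. (2) (charge conservation) If $\sum_{x\in\partial_{\rm in}D}s(x)\neq\sum_{y\in\partial_{\rm out}D}s(y)$ (signs read as $\pm1$), then $\mathrm{TrHol}^\omega_{\vec B}([D,s])=0$.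
   Context: Directed biangle. Let $\mathbb{B}=[0,1]\times\mathbb{R}$ with its standard orientation, with boundary arcs $b_{\rm out}=\{0\}\times\mathbb{R}$ and $b_{\rm in}=\{1\}\times\mathbb{R}$. The $\mathbb{R}$-coordinate is the horizontal coordinate; points of a boundary arc are horizontally ordered by increasing $\mathbb{R}$-coordinate. Diagrams. A boundary-ordered oriented tangle diagram $D$ in $\mathbb{B}$ is a compact oriented 1-manifold properly immersed in $\mathbb{B}$ whose only singularities are finitely many transverse double points (crossings) in the interior with over/under information, together with, for each of $b_{\rm in},b_{\rm out}$, a total order $\succ$ (''vertical ordering'') on the (distinct) endpoints of $D$ on that arc. Write $\partial_{\rm in}D=\partial D\cap b_{\rm in}$, $\partial_{\rm out}D=\partial D\cap b_{\rm out}$. $\mathcal{D}(\vec B)$ is the set of classes of such diagrams modulo isotopy through such diagrams and framed Reidemeister moves I (cancellation of two adjacent opposite kinks), II, III. A state of $D$ is a map $s:\partial D\to\{+,-\}$. The sign of a crossing is $+1$ if (tangent of over-strand, tangent of under-strand) is positively oriented, $-1$ otherwise. $[D_1]\otimes[D_2]$: disjoint union with $D_1$ at smaller horizontal coordinates than $D_2$ and all endpoints of $D_2$ vertically higher than those of $D_1$ on each arc. $[D_1]\circ[D_2]$ (when composable: $|\partial_{\rm in}D_1|=|\partial_{\rm out}D_2|$, the horizontal-order-preserving bijection preserves vertical orders and orientations): glue the $b_{\rm in}$ of the biangle of $D_1$ to the $b_{\rm out}$ of that of $D_2$. Vector spaces. $V=\mathbb{C}^2$ with basis $\xi_+,\xi_-$;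 factors of $V^{\otimes|\partial_{\rm in}D|}$, $V^{\otimes|\partial_{\rm out}D|}$ correspond to endpoints in increasing horizontal order. For a state $s$, $\xi^s_{\rm in}=\xi_{s(x_1)}\otimes\cdots\otimes\xi_{s(x_m)}$ where $x_1,\dots,x_m$ are the points of $\partial_{\rm in}D$ in increasing horizontal order ($=1$ if $m=0$), and similarly $\xi^s_{\rm out}$. $\langle\cdot,\cdot\rangle$ is the bilinear form making the tensor basis orthonormal. The map $G$. $G$ is the unique map assigning to $[D]\in\mathcal{D}(\vec B)$ a linear map $V^{\otimes|\partial_{\rm in}D|}\to V^{\otimes|\partial_{\rm out}D|}$, multiplicative for $\circ$ and $\otimes$, with the following values on elementary diagrams ($x_1,x_2\in b_{\rm in}$, $y_1,y_2\in b_{\rm out}$, $x_1$ below $x_2$ and $y_1$ below $y_2$ horizontally): identity (one arc from $b_{\rm in}$ to $b_{\rm out}$): $\mathrm{id}_V$; cup (one arc with endpoints $y_1\succ y_2$ on $b_{\rm out}$): $1\mapsto\xi_+\otimes\xi_--\omega^4\xi_-\otimes\xi_+$; cap (one arc with endpoints $x_1\succ x_2$ on $b_{\rm in}$): $\xi_+\otimes\xi_-\mapsto-\omega^{-4}$, $\xi_-\otimes\xi_+\mapsto1$, others $\mapsto0$; height exchange of type 1 (disjoint arcs $x_1$–$y_1$, $x_2$–$y_2$, $x_1\succ x_2$, $y_2\succ y_1$): $\xi_+\otimes\xi_-\mapsto\xi_+\otimes\xi_-+(\omega^4-\omega^{-4})\xi_-\otimes\xi_+$, other basis vectors fixed; type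 2 ($x_2\succ x_1$, $y_1\succ y_2$): the inverse; positive crossing (arcs $x_1$–$y_2$ and $x_2$–$y_1$ with one crossing of sign $+1$, both oriented from $b_{\rm in}$ to $b_{\rm out}$ or both the reverse, $x_1\succ x_2$, $y_1\succ y_2$): $\xi_i\otimes\xi_i\mapsto\omega^{-4}\xi_i\otimes\xi_i$, $\xi_+\otimes\xi_-\mapsto\xi_-\otimes\xi_+$, $\xi_-\otimes\xi_+\mapsto\xi_+\otimes\xi_-+(\omega^{-4}-\omega^4)\xi_-\otimes\xi_+$; negative crossing (same with sign $-1$): the inverse. Orientations of non-crossing elementary arcs are arbitrary. *)

From HB Require Import structures.
From mathcomp Require Import all_boot all_order all_algebra.
Set Implicit Arguments. Unset Strict Implicit. Unset Printing Implicit Defensive.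
Import Order.TTheory GRing.Theory Num.Theory.

(* Levels.  A level is a slice {u = const} of a diagram in Morse position:  *)
(* its intersection points with the diagram, listed in increasing horizontal *)
(* order.  For each point we record                                          *)
(*   - an orientation bit: true iff the strand through that point is         *)
(*     oriented towards b_out (decreasing u-coordinate);                     *)
(*   - a height (nat); only the relative order of the heights matters: it is *)
(*     the vertical ordering (bigger = vertically higher, i.e. "succ").       *)
Definition level := (seq bool * seq nat)%type.
Definition dlv : level := ([::], [::]).

Definition wf_level (lv : level) : Prop :=
  size lv.1 = size lv.2 /\ uniq lv.2.

(* Layers (elementary pieces tensored with identity strands).  The integer   *)
(* p is the horizontal position of the leftmost of the two involved points.  *)
(*  Cup p f   : arc with both endpoints at positions p, p+1 of the out-level *)
(*              (f = true : left endpoint higher, the elementary cup;        *)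
(*               f = false : reversed vertical order)                       *)
(*  Cap p f   : arc with both endpoints at positions p, p+1 of the in-level  *)
(*  Cross p s f : crossing of sign s (true = +1) of the strands at positions *)
(*              p, p+1, both strands co-oriented; f = true : left point      *)
(*              higher on both sides (the elementary crossing)              *)
(*  HEx p t   : height exchange of the points p, p+1; t = true : type 1     *)
(*              (left higher on the in-side, right higher on the out-side), *)
(*              t = false : type 2.                                         *)
Inductive layer :=
  | Cup of nat & bool
  | Cap of nat & bool
  | Cross of nat & bool & bool
  | HEx of nat & bool.
Definition dly : layer := HEx 0 true.

Definition sh (p j : nat) : nat := if j < p then j else j.+2.

Definition lefthigh (h : seq nat) (p : nat) : bool := nth 0 h p.+1 < nth 0 h p.

Definition adjh (h : seq nat) (p : nat) : Prop :=
  forall q, q < size h ->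
    ~~ ((minn (nth 0 h p) (nth 0 h p.+1) < nth 0 h q) &&
        (nth 0 h q < maxn (nth 0 h p) (nth 0 h p.+1))).

Definition ord_pres (ha hb : seq nat) (na : nat) (f : nat -> nat) : Prop :=
  forall j k, j < na -> k < na ->
    (nth 0 ha j < nth 0 ha k) = (nth 0 hb (f j) < nth 0 hb (f k)).

(* step l a b : layer l has in-level a (towards b_in) and out-level b. *)
Definition step (l : layer) (a b : level) : Prop :=
  match l with
  | Cup p f =>
      size b.1 = (size a.1).+2 /\ p <= size a.1 /\
      take p b.1 = take p a.1 /\ drop p.+2 b.1 = drop p a.1 /\
      nth false b.1 p != nth false b.1 p.+1 /\
      ord_pres a.2 b.2 (size a.1) (sh p) /\ adjh b.2 p /\ lefthigh b.2 p = f
  | Cap p f =>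
      size a.1 = (size b.1).+2 /\ p <= size b.1 /\
      take p a.1 = take p b.1 /\ drop p.+2 a.1 = drop p b.1 /\
      nth false a.1 p != nth false a.1 p.+1 /\
      ord_pres b.2 a.2 (size b.1) (sh p) /\ adjh a.2 p /\ lefthigh a.2 p = f
  | Cross p s f =>
      size b.1 = size a.1 /\ p.+1 < size a.1 /\
      take p b.1 = take p a.1 /\ drop p.+2 b.1 = drop p.+2 a.1 /\
      nth false a.1 p = nth false a.1 p.+1 /\
      nth false b.1 p = nth false a.1 p /\
      nth false b.1 p.+1 = nth false a.1 p /\
      ord_pres a.2 b.2 (size a.1) id /\ adjh a.2 p /\ lefthigh a.2 p = f
  | HEx p t =>
      b.1 = a.1 /\ p.+1 < size a.1 /\
      (forall j k, j < size a.1 -> k < size a.1 ->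
         ~~ ((j == p) && (k == p.+1)) -> ~~ ((j == p.+1) && (k == p)) ->
         (nth 0 a.2 j < nth 0 a.2 k) = (nth 0 b.2 j < nth 0 b.2 k)) /\
      adjh a.2 p /\ lefthigh a.2 p = t /\ lefthigh b.2 p = ~~ t
  end.

(* A diagram: levels lv_0 (= boundary on b_out), ..., lv_k (= boundary on    *)
(* b_in) and layers l_0, ..., l_{k-1}, layer l_j lying between lv_j (its     *)
(* out-side) and lv_{j+1} (its in-side); the diagram is l_0 o ... o l_{k-1}. *)
Record diagram := Diagram { dlev : seq level; dlay : seq layer }.

Definition valid (D : diagram) : Prop :=
  size (dlev D) = (size (dlay D)).+1 /\
      (forall j, j < size (dlev D) -> wf_level (nth dlv (dlev D) j)) /\
      (forall j, j < size (dlay D) ->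
         step (nth dly (dlay D) j) (nth dlv (dlev D) j.+1) (nth dlv (dlev D) j)).

Definition out_level (D : diagram) : level := nth dlv (dlev D) 0.
Definition in_level (D : diagram) : level := last dlv (dlev D).

Definition rot_level (lv : level) : level := (map negb (rev lv.1), rev lv.2).

(* n = number of points on the in-side of the layer *)
Definition rot_layer (l : layer) (n : nat) : layer :=
  match l with
  | Cup p f => Cap (n - p) (~~ f)
  | Cap p f => Cup (n - 2 - p) (~~ f)
  | Cross p s f => Cross (n - 2 - p) s (~~ f)
  | HEx p t => HEx (n - 2 - p) t
  end.

Definition rotate (D : diagram) : diagram :=
  Diagram (rev (map rot_level (dlev D)))
          (rev [seq rot_layer (nth dly (dlay D) j) (size (nth dlv (dlev D) j.+1).1)
               | j <- iota 0 (size (dlay D))]).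

(* The map G.  States: true = +, false = -.  A linear map                    *)
(* V^{(x) m} -> V^{(x) n} is represented by its coefficients                 *)
(* c out in = < xi_out , G xi_in >.                                          *)
Local Open Scope ring_scope.

Section G.
Variables (F : fieldType) (w : F).

Definition q4 : F := w ^+ 4.
Definition q4i : F := w ^- 4.

Definition bb := (bool * bool)%type.

(* cup : 1 |-> xi_+ (x) xi_- - w^4 xi_- (x) xi_+ ; coefficient at out-state *)
Definition cupc (o : bb) : F :=
  match o with (true, false) => 1 | (false, true) => - q4 | _ => 0 end.
(* cap : xi_+ xi_- |-> -w^-4, xi_- xi_+ |-> 1 ; coefficient at in-state *)
Definition capc (i : bb) : F :=
  match i with (true, false) => - q4i | (false, true) => 1 | _ => 0 end.
(* height exchange type 1 : xi_+ xi_- |-> xi_+ xi_- + (w^4 - w^-4) xi_- xi_+ *)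
Definition he1c (o i : bb) : F :=
  if o == i then 1 else
  if (o == (false, true)) && (i == (true, false)) then q4 - q4i else 0.
(* type 2 : the inverse, xi_+ xi_- |-> xi_+ xi_- - (w^4 - w^-4) xi_- xi_+ *)
Definition he2c (o i : bb) : F :=
  if o == i then 1 else
  if (o == (false, true)) && (i == (true, false)) then - (q4 - q4i) else 0.
Definition xposc (o i : bb) : F :=
  match i, o with
  | (true, true), (true, true) => q4i
  | (false, false), (false, false) => q4i
  | (true, false), (false, true) => 1
  | (false, true), (true, false) => 1
  | (false, true), (false, true) => q4i - q4
  | _, _ => 0
  end.
(* negative crossing = inverse of the positive one (written out):
   xi_i xi_i |-> w^4 xi_i xi_i, xi_+ xi_- |-> (w^4 - w^-4) xi_+ xi_- + xi_- xi_+,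
   xi_- xi_+ |-> xi_+ xi_- *)
Definition xnegc (o i : bb) : F :=
  match i, o with
  | (true, true), (true, true) => q4
  | (false, false), (false, false) => q4
  | (true, false), (true, false) => q4 - q4i
  | (true, false), (false, true) => 1
  | (false, true), (true, false) => 1
  | _, _ => 0
  end.
Definition xc (s : bool) := if s then xposc else xnegc.

(* non-elementary local orders, forced by multiplicativity:
   reversed cup = HE1 o cup, reversed cap = cap o HE2,
   reversed crossing = HE1 o X o HE2 *)
Definition cupf (f : bool) (o : bb) : F :=
  if f then cupc o else \sum_(r : bb) he1c o r * cupc r.
Definition capf (f : bool) (i : bb) : F :=
  if f then capc i else \sum_(r : bb) capc r * he2c r i.
Definition crossf (s f : bool) (o i : bb) : F :=
  if f then xc s o i
  else \sum_(r : bb) \sum_(r' : bb) he1c o r * xc s r r' * he2c r' i.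
Definition hec (t : bool) := if t then he1c else he2c.

Definition pr (x : seq bool) (p : nat) : bb := (nth false x p, nth false x p.+1).

Definition layer_coef (l : layer) (o i : seq bool) : F :=
  match l with
  | Cup p f => (i == take p o ++ drop p.+2 o)%:R * cupf f (pr o p)
  | Cap p f => (o == take p i ++ drop p.+2 i)%:R * capf f (pr i p)
  | Cross p s f =>
      ((take p o == take p i) && (drop p.+2 o == drop p.+2 i))%:R
        * crossf s f (pr o p) (pr i p)
  | HEx p t =>
      ((take p o == take p i) && (drop p.+2 o == drop p.+2 i))%:R
        * hec t (pr o p) (pr i p)
  end.

Fixpoint Gc (lvs : seq level) (lys : seq layer) : seq bool -> seq bool -> F :=
  match lys with
  | [::] => fun o i => (o == i)%:R
  | l :: lys' => fun o i =>
      \sum_(t : (size (nth dlv lvs 1).1).-tuple bool)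
        layer_coef l o t * Gc (behead lvs) lys' t i
  end.

(* TrHol([D, s]) = < xi^s_out, G([D]) xi^s_in > ; so = states on b_out,   *)
(* si = states on b_in, both in increasing horizontal order *)
Definition TrHol (D : diagram) (so si : seq bool) : F := Gc (dlev D) (dlay D) so si.

End G.

Definition charge (s : seq bool) : int := \sum_(b <- s) (if b then 1 else -1).

From HB Require Import structures.
From mathcomp Require Import all_boot all_order all_algebra.
From mathcomp Require Import ring zify.
Set Implicit Arguments. Unset Strict Implicit. Unset Printing Implicit Defensive.
Import GRing.Theory.

(* G([D]) is the product of the matrices of the layers of D.  The rotation R
   reverses the order of the layers and the order of the tensor factors on
   each level, swaps b_in and b_out, and turns every elementary piece into an
   elementary piece of the same kind (a cup into a cap with the opposite
   vertical order, a crossing or height exchange into one at the mirrored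
   position).  So the invariance under R reduces to a finite check: the
   coefficient of an elementary piece at (out-state, in-state) equals the
   coefficient of the rotated piece at (reversed in-state, reversed
   out-state).  Charge conservation holds because every
   nonzero entry of an elementary matrix connects states of equal total
   charge, and charge is additive over tensor factors. *)

Lemma strict_between_compat (a b c a' b' c' : nat) :
  (a < c) = (a' < c') -> (c < b) = (c' < b') -> (b < c) = (b' < c') -> (c < a) = (c' < a') ->
  ~~ ((minn a b < c) && (c < maxn a b)) -> ~~ ((minn a' b' < c') && (c' < maxn a' b')).
Proof.
case: (ltnP a' c'); case: (ltnP c' b'); case: (ltnP b' c'); case: (ltnP c' a') => + + + +
  e1 e2 e3 e4; rewrite ?e1 ?e2 ?e3 ?e4; lia.
Qed.

Lemma adjh_transfer (ha hb : seq nat) p :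
  size ha = size hb -> p.+1 < size ha ->
  (forall j k, j < size ha -> k < size ha ->
     ~~ ((j == p) && (k == p.+1)) -> ~~ ((j == p.+1) && (k == p)) ->
     (nth 0 ha j < nth 0 ha k) = (nth 0 hb j < nth 0 hb k)) ->
  adjh ha p -> adjh hb p.
Proof.
move=> sz lt ord ad q; rewrite -sz => hq.
have [->|nq1] := eqVneq q p; first lia.
have [->|nq2] := eqVneq q p.+1; first lia.
apply: (strict_between_compat _ _ _ _ (ad q hq)); rewrite ord ?nq1 ?nq2 ?andbF //; lia.
Qed.

Lemma ltn_nth_uniqC (h : seq nat) i j : uniq h -> i < size h -> j < size h -> i != j ->
  (nth 0 h i < nth 0 h j) = ~~ (nth 0 h j < nth 0 h i).
Proof. by move=> u hi hj ne; rewrite -leqNgt ltn_neqAle nth_uniq // ne. Qed.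

Lemma lefthigh_rev (h : seq nat) p : uniq h -> p.+1 < size h ->
  lefthigh (rev h) (size h - 2 - p) = ~~ lefthigh h p.
Proof.
move=> u lt; rewrite /lefthigh !nth_rev; try lia.
have -> : size h - (size h - 2 - p).+2 = p by lia.
have -> : size h - (size h - 2 - p).+1 = p.+1 by lia.
by rewrite ltn_nth_uniqC //; lia.
Qed.

Lemma adjh_rev (h : seq nat) p : p.+1 < size h -> adjh h p -> adjh (rev h) (size h - 2 - p).
Proof.
move=> lt ad q; rewrite size_rev => hq.
rewrite !nth_rev; try lia.
have -> : size h - (size h - 2 - p).+1 = p.+1 by lia.
have -> : size h - (size h - 2 - p).+2 = p by lia.
by rewrite minnC maxnC; apply: ad; lia.
Qed.

Lemma nth_map_negb_rev (s : seq bool) i : i < size s ->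
  nth false (map negb (rev s)) i = ~~ nth false s (size s - i.+1).
Proof. by move=> h; rewrite (nth_map false) ?size_rev // nth_rev. Qed.

Lemma sh_ltn p j n : j < n -> sh p j < n.+2.
Proof. rewrite /sh; case: ifP; lia. Qed.

Lemma sh_rev n p j : p <= n -> j < n -> n.+2 - (sh (n - p) j).+1 = sh p (n - j.+1).
Proof. rewrite /sh; case: ifP; case: ifP; lia. Qed.

Lemma step_Cup_rot p f (a b : level) : wf_level a -> wf_level b -> step (Cup p f) a b ->
  step (Cap (size a.1 - p) (~~ f)) (rot_level b) (rot_level a).
Proof.
move=> [sa ua] [sb2 ub] [sb [pa [tk [dr [ne [op [ad lh]]]]]]].
set n := size a.1 in sa sb pa op *.
rewrite /step /rot_level /= !size_map !size_rev sb.
have e1 : n.+2 - (n - p) = p.+2 by lia.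
have e2 : n - (n - p) = p by lia.
have e3 : n.+2 - (n - p).+2 = p by lia.
have e4 : n.+2 - (n - p).+1 = p.+1 by lia.
split=> //; split; first lia.
split; first by rewrite -!map_take !take_rev sb e1 e2 dr.
split; first by rewrite -!map_drop !drop_rev sb e3 e2 tk.
split; first by rewrite !nth_map_negb_rev ?size_rev ?sb ?e3 ?e4 1?eq_sym //; lia.
split.
  move=> j k hj hk; rewrite !nth_rev -?sa -?sb2 ?sb; try lia; try exact: sh_ltn.
  by rewrite !sh_rev //; apply: op; lia.
have -> : n - p = size b.2 - 2 - p by rewrite -sb2 sb; lia.
split; first by apply: adjh_rev => //; rewrite -sb2 sb; lia.
by rewrite lefthigh_rev // -?sb2 ?sb ?lh //; lia.
Qed.

Lemma step_Cross_rot p s f (a b : level) : wf_level a -> wf_level b -> step (Cross p s f) a b ->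
  step (Cross (size a.1 - 2 - p) s (~~ f)) (rot_level b) (rot_level a).
Proof.
move=> [sa ua] [sb2 ub] [sb [pa [tk [dr [e0 [e1 [e2 [op [ad lh]]]]]]]]].
set n := size a.1 in sa sb pa op *.
rewrite /step /rot_level /= !size_map !size_rev sb.
have f1 : n - (n - 2 - p) = p.+2 by lia.
have f2 : n - (n - 2 - p).+2 = p by lia.
have f3 : n - (n - 2 - p).+1 = p.+1 by lia.
split=> //; split; first lia.
split; first by rewrite -!map_take !take_rev sb f1 dr.
split; first by rewrite -!map_drop !drop_rev sb f2 tk.
do 3 (split; first by rewrite !nth_map_negb_rev ?sb ?f3 ?f2 ?e1 ?e2 -?e0 //; lia).
have adb : adjh b.2 p.
  apply: adjh_transfer ad; rewrite -?sa -?sb2 ?sb // => j k hj hk _ _.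
  by rewrite op.
split; first by move=> j k hj hk; rewrite !nth_rev -?sa -?sb2 ?sb ?op //; lia.
have -> : n - 2 - p = size b.2 - 2 - p by rewrite -sb2 sb.
split; first by apply: adjh_rev => //; rewrite -sb2 sb.
by rewrite lefthigh_rev // -?sb2 ?sb // -lh /lefthigh !op //; lia.
Qed.

Lemma step_HEx_rot p t (a b : level) : wf_level a -> wf_level b -> step (HEx p t) a b ->
  step (HEx (size a.1 - 2 - p) t) (rot_level b) (rot_level a).
Proof.
move=> [sa ua] [sb2 ub] [e [pa [hord [ad [l1 l2]]]]].
set n := size a.1 in sa pa hord *.
have sb : size b.1 = n by rewrite e.
rewrite /step /rot_level /= !size_map !size_rev sb e.
split=> //; split; first lia.
split; first by move=> j k hj hk not_pq not_qp; rewrite !nth_rev -?sa -?sb2 ?sb ?hord //; lia.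
have adb : adjh b.2 p.
  by apply: adjh_transfer ad; rewrite -?sa -?sb2 ?sb // => j k hj hk; exact: hord.
have -> : n - 2 - p = size b.2 - 2 - p by rewrite -sb2 sb.
split; first by apply: adjh_rev => //; rewrite -sb2 sb.
split; first by rewrite lefthigh_rev // ?l2 ?negbK // -sb2 sb.
by rewrite -sb2 sb sa lefthigh_rev // ?l1 // -sa.
Qed.

(* [step (Cap p f) a b] unfolds to [step (Cup p f) b a]. *)
Lemma step_rot l (a b : level) : wf_level a -> wf_level b -> step l a b ->
  step (rot_layer l (size a.1)) (rot_level b) (rot_level a).
Proof.
case: l => [p f|p f|p s f|p t] wa wb st.
- exact: step_Cup_rot.
- have [sz _] := st; rewrite /= sz.
  have -> : (size b.1).+2 - 2 - p = size b.1 - p by lia.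
  exact: step_Cup_rot.
- exact: step_Cross_rot.
- exact: step_HEx_rot.
Qed.

Lemma wf_rot_level lv : wf_level lv -> wf_level (rot_level lv).
Proof. by case=> s u; rewrite /wf_level /= size_map !size_rev rev_uniq. Qed.

Definition rot_layers (lvs : seq level) (lys : seq layer) : seq layer :=
  [seq rot_layer (nth dly lys j) (size (nth dlv lvs j.+1).1) | j <- iota 0 (size lys)].

Lemma rot_layers_cons lvs l lys : rot_layers lvs (l :: lys) =
  rot_layer l (size (nth dlv lvs 1).1) :: rot_layers (behead lvs) lys.
Proof.
rewrite /rot_layers /= -[1]/(1 + 0) iotaDl -map_comp; congr cons.
by apply: eq_map => j /=; rewrite !nth_behead.
Qed.

Lemma valid_rotate D : valid D -> valid (rotate D).
Proof.
case: D => lvs lys [/= e [wf st]]; rewrite /valid /rotate /=.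
split; first by rewrite size_rev size_map size_rev size_map size_iota.
split.
  move=> j; rewrite size_rev size_map => hj.
  rewrite nth_rev ?size_map // (nth_map dlv); last lia.
  by apply/wf_rot_level/wf; lia.
move=> j; rewrite size_rev size_map size_iota => hj.
rewrite nth_rev ?size_map ?size_iota // (nth_map 0) ?size_iota ?nth_iota; try lia.
rewrite !nth_rev ?size_map; try lia.
rewrite !(nth_map dlv) ?add0n; try lia.
have -> : size lvs - j.+2 = size lys - j.+1 by lia.
have -> : size lvs - j.+1 = (size lys - j.+1).+1 by lia.
by apply: step_rot; [apply: wf | apply: wf | apply: st]; lia.
Qed.

Lemma valid_behead lvs l lys : valid (Diagram lvs (l :: lys)) ->
  valid (Diagram (behead lvs) lys) /\ step l (nth dlv lvs 1) (nth dlv lvs 0).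
Proof.
case: lvs => [|lv0 lvs] [/= e [wf st]] //.
split; last exact: (st 0).
by split; [case: e | split=> j hj; [exact: (wf j.+1) | exact: (st j.+1)]].
Qed.

Section PairSplit.
Variables (s : seq bool) (n p : nat).
Hypotheses (size_s : size s = n) (p_lt : p.+1 < n).

Lemma take_rev_pair : take (n - 2 - p) (rev s) = rev (drop p.+2 s).
Proof. by rewrite take_rev; congr (rev (drop _ _)); rewrite size_s; lia. Qed.

Lemma drop_rev_pair : drop (n - 2 - p).+2 (rev s) = rev (take p s).
Proof. by rewrite drop_rev; congr (rev (take _ _)); rewrite size_s; lia. Qed.

Lemma pr_rev : pr (rev s) (n - 2 - p) = ((pr s p).2, (pr s p).1).
Proof. by rewrite /pr !nth_rev size_s; try lia; congr pair; congr nth; lia. Qed.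

Lemma charge_pair_split :
  charge s = (charge (take p s) + charge [:: (pr s p).1; (pr s p).2] + charge (drop p.+2 s))%R.
Proof.
have lt : p.+1 < size s by rewrite size_s.
rewrite -{1}(cat_take_drop p s) (drop_nth false) 1?(drop_nth false (n := p.+1)) //; last lia.
by rewrite /charge !big_cat !big_cons big_nil /= addr0 !addrA.
Qed.

End PairSplit.

Lemma eq_rev (s1 s2 : seq bool) : (rev s1 == rev s2) = (s1 == s2).
Proof. exact: (inj_eq (can_inj revK)). Qed.

Local Open Scope ring_scope.

Lemma sum_bool_pair (R : nmodType) (G : bb -> R) :
  \sum_(r : bb) G r = G (true, true) + G (true, false) + G (false, true) + G (false, false).
Proof.
rewrite (eq_bigr (fun r => G (r.1, r.2))); last by case.
by rewrite -(pair_big xpredT xpredT (fun a b => G (a, b))) /= !big_bool /= !addrA.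
Qed.

Section TupleSums.
Variables (R : pzSemiRingType) (n : nat).

Lemma big_tuple_eq_r (i : seq bool) (g : seq bool -> R) : size i = n ->
  \sum_(t : n.-tuple bool) g t * (tval t == i)%:R = g i.
Proof.
move=> /eqP si; rewrite (bigD1 (Tuple si)) //= eqxx mulr1 big1 ?addr0 // => u ne_u.
suff /negbTE -> : tval u != i by rewrite mulr0.
by apply: contra ne_u => /eqP e; apply/eqP/val_inj.
Qed.

Lemma big_tuple_eq_l (i : seq bool) (g : seq bool -> R) : size i = n ->
  \sum_(t : n.-tuple bool) (i == tval t)%:R * g t = g i.
Proof.
move=> si; rewrite -[RHS](big_tuple_eq_r g si); apply: eq_bigr => t _.
by rewrite eq_sym mulr_natl mulr_natr.
Qed.

Lemma big_tuple_rev (g : seq bool -> R) :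
  \sum_(t : n.-tuple bool) g t = \sum_(t : n.-tuple bool) g (rev t).
Proof.
have rev_inj : injective (@rev_tuple n bool).
  by move=> x y /(congr1 val) /(can_inj revK) e; apply: val_inj.
by rewrite (reindex_inj rev_inj).
Qed.

End TupleSums.

Lemma big_tuple_cast (R : nmodType) n m (e : n = m) (g : seq bool -> R) :
  \sum_(t : n.-tuple bool) g t = \sum_(t : m.-tuple bool) g t.
Proof. by subst. Qed.

Lemma size_head_rot_levels (lvs : seq level) :
  size (nth dlv (rev (map rot_level lvs)) 0).1 = size (last dlv lvs).1.
Proof.
case/lastP: lvs => [|lvs lv] //.
by rewrite map_rcons rev_rcons last_rcons /= size_map size_rev.
Qed.

Section Holonomy.
Variables (F : fieldType) (w : F).

Lemma cupf_charge f x : cupf w f x != 0 -> charge [:: x.1; x.2] = 0.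
Proof.
by case: x => a b; case: f; case: a; case: b; rewrite /cupf ?sum_bool_pair /cupc /he1c /= ?eqxx;
  rewrite /charge !big_cons big_nil //= ?(mulr0, mul0r, addr0, add0r) ?eqxx.
Qed.

Lemma capf_charge f x : capf w f x != 0 -> charge [:: x.1; x.2] = 0.
Proof.
by case: x => a b; case: f; case: a; case: b; rewrite /capf ?sum_bool_pair /capc /he2c /= ?eqxx;
  rewrite /charge !big_cons big_nil //= ?(mulr0, mul0r, addr0, add0r) ?eqxx.
Qed.

Lemma hec_charge t x y : hec w t x y != 0 ->
  charge [:: x.1; x.2] = charge [:: y.1; y.2].
Proof.
by case: x y => a b [a' b']; case: t; case: a; case: b; case: a'; case: b';
  rewrite /charge !big_cons big_nil /hec /he1c /he2c /= ?eqxx.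
Qed.

Lemma crossf_charge s f x y : crossf w s f x y != 0 ->
  charge [:: x.1; x.2] = charge [:: y.1; y.2].
Proof.
case: x y => a b [a' b']; case: s; case: f; case: a; case: b; case: a'; case: b';
  rewrite /charge !big_cons big_nil //= /crossf /xc /= ?sum_bool_pair /= ?sum_bool_pair;
  by rewrite /xposc /xnegc /he1c /he2c /= ?(mulr0, mul0r, addr0, add0r) ?eqxx.
Qed.

Lemma layer_coef_charge l (lv0 lv1 : level) (o t : seq bool) : step l lv1 lv0 ->
  size o = size lv0.1 -> size t = size lv1.1 ->
  layer_coef w l o t != 0 -> charge o = charge t.
Proof.
case: l => [p f|p f|p s f|p u] [sz [p_le _]] so st /=.
- have lt : (p.+1 < size o)%N by lia.
  case: (t =P _) => [->|]; last by rewrite mul0r eqxx.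
  rewrite mul1r => /cupf_charge ch.
  by rewrite (charge_pair_split (erefl _) lt) ch addr0 /charge big_cat.
- have lt : (p.+1 < size t)%N by lia.
  case: (o =P _) => [->|]; last by rewrite mul0r eqxx.
  rewrite mul1r => /capf_charge ch.
  by rewrite [RHS](charge_pair_split (erefl _) lt) ch addr0 /charge big_cat.
- have lt : (p.+1 < size o)%N by lia.
  have so_t : size o = size t by rewrite so st sz.
  case: (@andP (take p o == take p t)) => [[/eqP tk /eqP dr]|]; last by rewrite mul0r eqxx.
  rewrite mul1r => /crossf_charge ch.
  by rewrite (charge_pair_split (erefl _) lt) [RHS](charge_pair_split (esym so_t) lt) tk dr ch.
- have so_t : size o = size t by rewrite so st sz.
  have lt : (p.+1 < size o)%N by rewrite so sz.
  case: (@andP (take p o == take p t)) => [[/eqP tk /eqP dr]|]; last by rewrite mul0r eqxx.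
  rewrite mul1r => /hec_charge ch.
  by rewrite (charge_pair_split (erefl _) lt) [RHS](charge_pair_split (esym so_t) lt) tk dr ch.
Qed.

Lemma Gc_charge lys : forall lvs o i, valid (Diagram lvs lys) ->
  size o = size (nth dlv lvs 0).1 -> charge o != charge i -> Gc w lvs lys o i = 0.
Proof.
elim: lys => [|l lys IH] lvs o i V so ch.
  by case: (o =P i) ch => [->|/eqP/negbTE /= ->]; rewrite ?eqxx.
have [V' st] := valid_behead V.
case: lvs V V' st so => [|lv0 [|lv1 lvs]]; try by move=> [/= e _]; lia.
move=> _ V' st so /=; apply: big1 => t _.
have [e|ne] := eqVneq (charge o) (charge t).
  by rewrite (IH (lv1 :: lvs)) ?size_tuple ?mulr0 // -e.
suff -> : layer_coef w l o t = 0 by rewrite mul0r.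
by apply/eqP; apply: contraNT ne => /(layer_coef_charge st so (size_tuple t)) ->.
Qed.

Lemma Gc_rcons lys : forall lvs lv l o i, size lvs = (size lys).+1 ->
  size o = size (nth dlv lvs 0).1 -> size i = size lv.1 ->
  Gc w (rcons lvs lv) (rcons lys l) o i =
  \sum_(t : (size (last dlv lvs).1).-tuple bool) Gc w lvs lys o t * layer_coef w l t i.
Proof.
elim: lys => [|l0 lys IH] [|lv0 [|lv1 lvs]] //= lv l o i.
- move=> _ so si.
  by rewrite (big_tuple_eq_r (layer_coef w l o) si) (big_tuple_eq_l (layer_coef w l ^~ i) so).
- move=> [e] so si.
  have /= IH' := IH (lv1 :: lvs) lv l.
  under eq_bigr => t _ do rewrite IH' ?size_tuple ?e // big_distrr.
  rewrite exchange_big /=; apply: eq_bigr => t _.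
  by rewrite big_distrl /=; apply: eq_bigr => u _; rewrite mulrA.
Qed.

Hypothesis w_neq0 : w != 0.

Lemma cupf_capf f x : cupf w f x = capf w (~~ f) (x.2, x.1).
Proof.
case: x => a b.
have : q4 w * q4i w = 1 by rewrite /q4 /q4i mulfV // expf_neq0.
move: (q4 w) (q4i w) => x y xy.
by case: f; case: a; case: b; rewrite /cupf /capf /= ?sum_bool_pair /cupc /capc /he1c /he2c /=;
  ring.
Qed.

Lemma hec_rev t x y : hec w t x y = hec w t (y.2, y.1) (x.2, x.1).
Proof. by case: x y => a b [a' b']; case: t; case: a; case: b; case: a'; case: b'. Qed.

Lemma crossf_rev s f x y :
  crossf w s f x y = crossf w s (~~ f) (y.2, y.1) (x.2, x.1).
Proof.
case: x y => a b [a' b'].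
suff crossf_true_rev : forall a b a' b',
    crossf w s true (a, b) (a', b') = crossf w s false (b', a') (b, a).
  by case: f; [exact: crossf_true_rev | symmetry; exact: crossf_true_rev].
have : q4 w != 0 by rewrite expf_neq0.
rewrite /q4i -/(q4 w); move: (q4 w) => x x_neq0 {}a {}b {}a' {}b'.
by case: s; case: a; case: b; case: a'; case: b';
  rewrite /crossf /xc /= ?sum_bool_pair /= ?sum_bool_pair /xposc /xnegc /he1c /he2c /=; field.
Qed.

Lemma layer_coef_rot l (lv0 lv1 : level) (o t : seq bool) : step l lv1 lv0 ->
  size o = size lv0.1 -> size t = size lv1.1 ->
  layer_coef w (rot_layer l (size t)) (rev t) (rev o) = layer_coef w l o t.
Proof.
case: l => [p f|p f|p s f|p u] [sz [p_le _]] so st /=.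
- have -> : (size t - p = size o - 2 - p)%N by lia.
  have lt : (p.+1 < size o)%N by lia.
  rewrite (take_rev_pair (erefl _) lt) (drop_rev_pair (erefl _) lt) (pr_rev (erefl _) lt).
  by rewrite -rev_cat eq_rev cupf_capf.
- have lt : (p.+1 < size t)%N by lia.
  rewrite (take_rev_pair (erefl _) lt) (drop_rev_pair (erefl _) lt) (pr_rev (erefl _) lt).
  by rewrite -rev_cat eq_rev cupf_capf ?negbK -?surjective_pairing.
- have so_t : size o = size t by rewrite so st sz.
  have lt : (p.+1 < size t)%N by lia.
  rewrite (take_rev_pair (erefl _) lt) (drop_rev_pair (erefl _) lt) (pr_rev (erefl _) lt).
  rewrite (take_rev_pair so_t lt) (drop_rev_pair so_t lt) (pr_rev so_t lt).
  by rewrite !eq_rev andbC (eq_sym (take _ t)) (eq_sym (drop _ t)) [in RHS]crossf_rev.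
- have so_t : size o = size t by rewrite so st sz.
  have lt : (p.+1 < size t)%N by rewrite st.
  rewrite (take_rev_pair (erefl _) lt) (drop_rev_pair (erefl _) lt) (pr_rev (erefl _) lt).
  rewrite (take_rev_pair so_t lt) (drop_rev_pair so_t lt) (pr_rev so_t lt).
  by rewrite !eq_rev andbC (eq_sym (take _ t)) (eq_sym (drop _ t)) [in RHS]hec_rev.
Qed.

Lemma Gc_rot lys : forall lvs o i, valid (Diagram lvs lys) ->
  size o = size (nth dlv lvs 0).1 -> size i = size (last dlv lvs).1 ->
  Gc w lvs lys o i = Gc w (rev (map rot_level lvs)) (rev (rot_layers lvs lys)) (rev i) (rev o).
Proof.
elim: lys => [|l lys IH] lvs o i V so si.
  case: V => e _; case: lvs e so si => [|lv0 [|? ?]] //= _ so si.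
  by rewrite eq_rev eq_sym.
have [V' st] := valid_behead V.
case: lvs V V' st so si => [|lv0 [|lv1 lvs]]; try by move=> [/= e _]; lia.
move=> _ V' st so si.
have [size_lvs _] := V'.
(* After R the first layer of D is the last one, and the intermediate states
   are read reversed. *)
rewrite rot_layers_cons /= [rev (rot_level lv0 :: _)]rev_cons.
rewrite [rev (rot_layer _ _ :: _)]rev_cons -map_cons.
rewrite Gc_rcons ?size_rev ?size_head_rot_levels ?size_map ?size_iota //=; last first.
  by rewrite size_rev.
set G1 := Gc w _ _ (rev i); set L1 := layer_coef w (rot_layer _ _).
rewrite (@big_tuple_cast _ _ (size lv1.1) _ (fun s => G1 s * L1 s (rev o))); last first.
  by rewrite rev_cons last_rcons /= size_map size_rev.
rewrite (big_tuple_rev _ (fun s => G1 s * L1 s (rev o))) /=; apply: eq_bigr => t _.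
rewrite (IH (lv1 :: lvs)) ?size_tuple // mulrC /G1 /L1.
by rewrite -(layer_coef_rot st so (size_tuple t)) size_tuple.
Qed.

End Holonomy.

Theorem lemma4p18 (F : fieldType) (w : F) (D : diagram) (so si : seq bool) :
  w != 0 -> valid D ->
  size so = size (out_level D).1 -> size si = size (in_level D).1 ->
  (valid (rotate D) /\ TrHol w D so si = TrHol w (rotate D) (rev si) (rev so)) /\
  (charge si != charge so -> TrHol w D so si = 0).
Proof.
case: D => lvs lys w_neq0 V so_sz si_sz; split.
  by split; [apply: valid_rotate | apply: Gc_rot].
by rewrite eq_sym; apply: Gc_charge.
Qed.
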